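(* There exists a real binary sextic form $q\in F_{2,6}$ having two distinct signatures; i.e. the natural analogue of Sylvester's law of inertia fails for binary sextics.
   Context: $F_{2,6}$ is the space of real binary sextic forms in $x,y$. A representation of $p$ is an expression $p=\sum_{j=1}^r\lambda_j(\alpha_jx+\beta_jy)^{6}$ with $r\ge0$, $\alpha_j,\beta_j\in\mathbb R$, $0\ne\lambda_j\in\mathbb R$; it is honest if the linear forms $\alpha_jx+\beta_jy$ are pairwise non-proportional. Its badge is $(a,b)$ where $a=\#\{j:\lambda_j>0\}$, $b=\#\{j:\lambda_j<0\}$; $\mathcal B(p)$ is the set of badges of honest representations. With $(a,b)\preceq(c,d)$ iff $a\le c,b\le d$, a signature is a minimal element of $\mathcal B(p)$. *)

From Stdlib Require Import Reals Lra Lia.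
Open Scope R_scope.

Fixpoint rsum (n : nat) (f : nat -> R) : R :=
  match n with
  | O => 0
  | S m => rsum m f + f m
  end.

(* F_{2,6}: real binary sextic forms, viewed as functions R^2 -> R of the
   form  sum_{k=0}^6 c_k x^(6-k) y^k  (a real polynomial is determined by
   its values on R^2). *)
Definition sextic_form (p : R -> R -> R) : Prop :=
  exists c : nat -> R, forall x y : R,
    p x y = rsum 7 (fun k => c k * x ^ (6 - k) * y ^ k).

Definition is_representation (p : R -> R -> R) (r : nat)
  (lam al be : nat -> R) : Prop :=
  (forall i, (i < r)%nat -> lam i <> 0) /\
  (forall x y : R, p x y = rsum r (fun i => lam i * (al i * x + be i * y) ^ 6)).

(* honest: the linear forms are pairwise non-proportional
   (al_i x + be_i y and al_j x + be_j y are proportional iff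
    al_i be_j - al_j be_i = 0) *)
Definition honest (r : nat) (al be : nat -> R) : Prop :=
  forall i j, (i < r)%nat -> (j < r)%nat -> i <> j ->
    al i * be j - al j * be i <> 0.

Fixpoint count_pos (n : nat) (lam : nat -> R) : nat :=
  match n with
  | O => O
  | S m => (count_pos m lam + if Rlt_dec 0 (lam m) then 1 else 0)%nat
  end.

Fixpoint count_neg (n : nat) (lam : nat -> R) : nat :=
  match n with
  | O => O
  | S m => (count_neg m lam + if Rlt_dec (lam m) 0 then 1 else 0)%nat
  end.

Definition badge_of (p : R -> R -> R) (ab : nat * nat) : Prop :=
  exists r lam al be,
    is_representation p r lam al be /\ honest r al be /\
    ab = (count_pos r lam, count_neg r lam).

Definition badge_le (ab cd : nat * nat) : Prop :=
  (fst ab <= fst cd)%nat /\ (snd ab <= snd cd)%nat.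

Definition signature (p : R -> R -> R) (ab : nat * nat) : Prop :=
  badge_of p ab /\
  forall cd, badge_of p cd -> badge_le cd ab -> cd = ab.

From Stdlib Require Import Reals Lra Lia.
Open Scope R_scope.

(* We exhibit an explicit sextic q with honest five-term representations of
   badges (3,2) and (2,3) and show that every honest representation of q has
   at least five terms; then both badges are minimal, i.e. signatures.

   The lower bound rests on apolarity: if q = sum_i lam_i (a_i x + b_i y)^6
   and a form h = sum_j h_j X^(d-j) Y^j vanishes at every (a_i, b_i), then
   sum_j h_j m_(k+j) = 0 for the scaled coefficients m_k of q.  With at most
   three terms the cubic prod_i (b_i X - a_i Y) is apolar to q; the
   catalecticant of q is nonsingular, so the cubic is zero and some linear
   form vanishes, which honesty forbids.  With four terms the quartic
   prod_i (b_i X - a_i Y) is apolar; as a product of real linear forms its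
   Hessian is nonpositive and, by honesty, its invariant I is positive; an
   explicit certificate shows no quartic apolar to q has both properties. *)

Lemma rsum_ext (n : nat) (f g : nat -> R) :
  (forall i, (i < n)%nat -> f i = g i) -> rsum n f = rsum n g.
Proof.
  induction n as [|n IH]; intros H; simpl; [reflexivity|].
  rewrite IH by (intros; apply H; lia). rewrite H by lia. reflexivity.
Qed.

Lemma rsum_zero (n : nat) (f : nat -> R) :
  (forall i, (i < n)%nat -> f i = 0) -> rsum n f = 0.
Proof.
  induction n as [|n IH]; intros H; simpl; [reflexivity|].
  rewrite IH by (intros; apply H; lia). rewrite H by lia. ring.
Qed.

Lemma rsum_plus (n : nat) (f g : nat -> R) :
  rsum n (fun i => f i + g i) = rsum n f + rsum n g.
Proof. induction n as [|n IH]; simpl; [ring|rewrite IH; ring]. Qed.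

Lemma rsum_scal (n : nat) (c : R) (f : nat -> R) :
  rsum n (fun i => c * f i) = c * rsum n f.
Proof. induction n as [|n IH]; simpl; [ring|rewrite IH; ring]. Qed.

Lemma rsum_swap (n m : nat) (f : nat -> nat -> R) :
  rsum n (fun i => rsum m (fun j => f i j)) = rsum m (fun j => rsum n (fun i => f i j)).
Proof.
  induction n as [|n IH]; simpl.
  - symmetry. apply rsum_zero. reflexivity.
  - rewrite IH. symmetry.
    exact (rsum_plus m (fun j => rsum n (fun i => f i j)) (fun j => f n j)).
Qed.

Definition binom6 (k : nat) : R :=
  match k with
  | 0%nat | 6%nat => 1
  | 1%nat | 5%nat => 6
  | 2%nat | 4%nat => 15
  | 3%nat => 20
  | _ => 0
  end.

Definition moment (r : nat) (lam al be : nat -> R) (k : nat) : R :=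
  rsum r (fun i => lam i * al i ^ (6 - k) * be i ^ k).

Lemma power_sum_expand (r : nat) (lam al be : nat -> R) (x y : R) :
  rsum r (fun i => lam i * (al i * x + be i * y) ^ 6) =
  rsum 7 (fun k => binom6 k * moment r lam al be k * x ^ (6 - k) * y ^ k).
Proof.
  induction r as [|r IH]; unfold moment in *; simpl in *; [ring|].
  rewrite IH. ring.
Qed.

Lemma sextic_coef_unique (c d : nat -> R) :
  (forall x y, rsum 7 (fun k => c k * x ^ (6 - k) * y ^ k) =
               rsum 7 (fun k => d k * x ^ (6 - k) * y ^ k)) ->
  forall k, (k < 7)%nat -> c k = d k.
Proof.
  intros H k Hk.
  pose proof (H 0 1) as E0; pose proof (H 1 1) as E1; pose proof (H (-1) 1) as E2;
  pose proof (H 2 1) as E3; pose proof (H (-2) 1) as E4; pose proof (H 3 1) as E5;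
  pose proof (H (-3) 1) as E6.
  simpl in E0, E1, E2, E3, E4, E5, E6.
  destruct k as [|[|[|[|[|[|[|k]]]]]]]; [lra..|lia].
Qed.

Definition mq (k : nat) : R :=
  match k with
  | 0%nat => 150589038816
  | 1%nat => -99604175904
  | 2%nat => -8761715568
  | 3%nat => 86083080264
  | 4%nat => -16618839372
  | 5%nat => -263029581294
  | _ => 398652863237
  end.

Definition q (x y : R) : R := rsum 7 (fun k => binom6 k * mq k * x ^ (6 - k) * y ^ k).

Lemma q_is_sextic : sextic_form q.
Proof. exists (fun k => binom6 k * mq k). reflexivity. Qed.

Lemma q_nonzero : q 1 0 <> 0.
Proof. unfold q, mq, binom6. simpl. lra. Qed.

Lemma moments_of_q (r : nat) (lam al be : nat -> R) :
  is_representation q r lam al be ->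
  forall k, (k < 7)%nat -> moment r lam al be k = mq k.
Proof.
  intros [_ Hrep] k Hk.
  assert (E : binom6 k * moment r lam al be k = binom6 k * mq k).
  { apply (sextic_coef_unique (fun k => binom6 k * moment r lam al be k)
                              (fun k => binom6 k * mq k)); [|exact Hk].
    intros x y. rewrite <- power_sum_expand, <- Hrep. reflexivity. }
  assert (Hb : binom6 k <> 0).
  { destruct k as [|[|[|[|[|[|[|k]]]]]]]; unfold binom6; [lra..|lia]. }
  exact (Rmult_eq_reg_l _ _ _ E Hb).
Qed.

Definition vanishes_at (d : nat) (h : nat -> R) (a b : R) : Prop :=
  rsum (S d) (fun j => h j * a ^ (d - j) * b ^ j) = 0.

Definition apolar_to_q (d : nat) (h : nat -> R) : Prop :=
  forall k, (k + d <= 6)%nat -> rsum (S d) (fun j => h j * mq (k + j)) = 0.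

Lemma moment_apolar (r : nat) (lam al be : nat -> R) (d : nat) (h : nat -> R) (k : nat) :
  (forall i, (i < r)%nat -> vanishes_at d h (al i) (be i)) -> (k + d <= 6)%nat ->
  rsum (S d) (fun j => h j * moment r lam al be (k + j)) = 0.
Proof.
  intros Hvan Hkd. unfold moment.
  transitivity (rsum (S d) (fun j =>
    rsum r (fun i => h j * (lam i * al i ^ (6 - (k + j)) * be i ^ (k + j))))).
  { apply rsum_ext. intros j _. symmetry. apply rsum_scal. }
  rewrite rsum_swap. apply rsum_zero. intros i Hi.
  transitivity (lam i * al i ^ (6 - k - d) * be i ^ k *
                rsum (S d) (fun j => h j * al i ^ (d - j) * be i ^ j)).
  { rewrite <- rsum_scal. apply rsum_ext. intros j Hj.
    replace (6 - (k + j))%nat with ((6 - k - d) + (d - j))%nat by lia.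
    rewrite !pow_add. ring. }
  rewrite (Hvan i Hi). ring.
Qed.

Lemma rep_apolar (r : nat) (lam al be : nat -> R) (d : nat) (h : nat -> R) :
  is_representation q r lam al be ->
  (forall i, (i < r)%nat -> vanishes_at d h (al i) (be i)) -> apolar_to_q d h.
Proof.
  intros Hrep Hvan k Hkd.
  rewrite <- (moment_apolar r lam al be d h k Hvan Hkd).
  apply rsum_ext. intros j Hj.
  rewrite (moments_of_q r lam al be Hrep) by lia. reflexivity.
Qed.

Lemma linear_times_linear_zero (a b p0 p1 : R) :
  b * p0 = 0 -> b * p1 - a * p0 = 0 -> a * p1 = 0 ->
  (a = 0 /\ b = 0) \/ (p0 = 0 /\ p1 = 0).
Proof.
  intros E0 E1 E2.
  destruct (Req_dec b 0) as [Hb|Hb].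
  - subst b. destruct (Req_dec a 0) as [Ha|Ha]; [left; auto|right].
    split; apply (Rmult_eq_reg_l a); lra.
  - right.
    assert (Hp0 : p0 = 0) by (apply (Rmult_eq_reg_l b); lra). subst p0.
    split; [reflexivity|]. apply (Rmult_eq_reg_l b); lra.
Qed.

Lemma linear_times_quadratic_zero (a b p0 p1 p2 : R) :
  b * p0 = 0 -> b * p1 - a * p0 = 0 -> b * p2 - a * p1 = 0 -> a * p2 = 0 ->
  (a = 0 /\ b = 0) \/ (p0 = 0 /\ p1 = 0 /\ p2 = 0).
Proof.
  intros E0 E1 E2 E3.
  destruct (Req_dec b 0) as [Hb|Hb].
  - subst b. destruct (Req_dec a 0) as [Ha|Ha]; [left; auto|right].
    repeat split; apply (Rmult_eq_reg_l a); lra.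
  - right.
    assert (Hp0 : p0 = 0) by (apply (Rmult_eq_reg_l b); lra). subst p0.
    assert (Hp1 : p1 = 0) by (apply (Rmult_eq_reg_l b); lra). subst p1.
    repeat split; apply (Rmult_eq_reg_l b); lra.
Qed.

(* Coefficients of (b0 X - a0 Y)(b1 X - a1 Y)(b2 X - a2 Y). *)
Definition cubic_coef (a b : nat -> R) (j : nat) : R :=
  match j with
  | 0%nat => b 0%nat * b 1%nat * b 2%nat
  | 1%nat => - (a 0%nat * b 1%nat * b 2%nat + b 0%nat * a 1%nat * b 2%nat
                + b 0%nat * b 1%nat * a 2%nat)
  | 2%nat => a 0%nat * a 1%nat * b 2%nat + a 0%nat * b 1%nat * a 2%nat
             + b 0%nat * a 1%nat * a 2%nat
  | 3%nat => - (a 0%nat * a 1%nat * a 2%nat)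
  | _ => 0
  end.

Lemma cubic_vanishes (a b : nat -> R) (i : nat) :
  (i < 3)%nat -> vanishes_at 3 (cubic_coef a b) (a i) (b i).
Proof.
  intros Hi. unfold vanishes_at, cubic_coef.
  destruct i as [|[|[|i]]]; [simpl; ring..|lia].
Qed.

Lemma cubic_zero_factor (a b : nat -> R) :
  (forall j, (j <= 3)%nat -> cubic_coef a b j = 0) ->
  exists i, (i < 3)%nat /\ a i = 0 /\ b i = 0.
Proof.
  intros H.
  pose proof (H 0%nat ltac:(lia)) as C0; pose proof (H 1%nat ltac:(lia)) as C1;
  pose proof (H 2%nat ltac:(lia)) as C2; pose proof (H 3%nat ltac:(lia)) as C3.
  unfold cubic_coef in C0, C1, C2, C3.
  destruct (linear_times_quadratic_zero (a 0%nat) (b 0%nat) (b 1%nat * b 2%nat)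
              (- (a 1%nat * b 2%nat + b 1%nat * a 2%nat)) (a 1%nat * a 2%nat))
    as [[Ha Hb]|(P0 & P1 & P2)]; try lra.
  - exists 0%nat. auto.
  - destruct (linear_times_linear_zero (a 1%nat) (b 1%nat) (b 2%nat) (- a 2%nat))
      as [[Ha Hb]|[Hb Ha]]; try lra.
    + exists 1%nat. auto.
    + exists 2%nat. split; [lia|split; lra].
Qed.

(* The catalecticant of q is nonsingular: only the zero cubic is apolar to q. *)
Lemma cubic_apolar_trivial (h : nat -> R) :
  apolar_to_q 3 h -> forall j, (j <= 3)%nat -> h j = 0.
Proof.
  intros H j Hj.
  pose proof (H 0%nat ltac:(lia)) as A0; pose proof (H 1%nat ltac:(lia)) as A1;
  pose proof (H 2%nat ltac:(lia)) as A2; pose proof (H 3%nat ltac:(lia)) as A3.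
  simpl in A0, A1, A2, A3.
  destruct j as [|[|[|[|j]]]]; [lra..|lia].
Qed.

(* Coefficients of (b0 X - a0 Y)(b1 X - a1 Y)(b2 X - a2 Y)(b3 X - a3 Y). *)
Definition quartic_coef (a b : nat -> R) (j : nat) : R :=
  let a0 := a 0%nat in let a1 := a 1%nat in let a2 := a 2%nat in let a3 := a 3%nat in
  let b0 := b 0%nat in let b1 := b 1%nat in let b2 := b 2%nat in let b3 := b 3%nat in
  match j with
  | 0%nat => b0 * b1 * b2 * b3
  | 1%nat => - (a0 * b1 * b2 * b3 + b0 * a1 * b2 * b3 + b0 * b1 * a2 * b3 + b0 * b1 * b2 * a3)
  | 2%nat => a0 * a1 * b2 * b3 + a0 * b1 * a2 * b3 + a0 * b1 * b2 * a3
             + b0 * a1 * a2 * b3 + b0 * a1 * b2 * a3 + b0 * b1 * a2 * a3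
  | 3%nat => - (a0 * a1 * a2 * b3 + a0 * a1 * b2 * a3 + a0 * b1 * a2 * a3 + b0 * a1 * a2 * a3)
  | 4%nat => a0 * a1 * a2 * a3
  | _ => 0
  end.

Lemma quartic_vanishes (a b : nat -> R) (i : nat) :
  (i < 4)%nat -> vanishes_at 4 (quartic_coef a b) (a i) (b i).
Proof.
  intros Hi. unfold vanishes_at, quartic_coef.
  destruct i as [|[|[|[|i]]]]; [simpl; ring..|lia].
Qed.

(* Hessian determinant f_XX f_YY - f_XY^2 of f = sum_j h_j X^(4-j) Y^j. *)
Definition hessian4 (h : nat -> R) (X Y : R) : R :=
  (12 * h 0%nat * X^2 + 6 * h 1%nat * X * Y + 2 * h 2%nat * Y^2)
  * (2 * h 2%nat * X^2 + 6 * h 3%nat * X * Y + 12 * h 4%nat * Y^2)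
  - (3 * h 1%nat * X^2 + 4 * h 2%nat * X * Y + 3 * h 3%nat * Y^2)^2.

(* The classical invariant I of a binary quartic. *)
Definition invariant_I (h : nat -> R) : R :=
  12 * h 0%nat * h 4%nat - 3 * h 1%nat * h 3%nat + h 2%nat ^ 2.

(* A product of four real linear forms has nonpositive Hessian: it is -3
   times a sum of squares indexed by the pairs of factors. *)
Lemma quartic_hessian_nonpos (a b : nat -> R) (X Y : R) :
  hessian4 (quartic_coef a b) X Y <= 0.
Proof.
  set (L := fun i => b i * X - a i * Y).
  set (D := fun i j => a i * b j - a j * b i).
  assert (E : hessian4 (quartic_coef a b) X Y =
    -3 * ((D 0%nat 1%nat * L 2%nat * L 3%nat)^2 + (D 0%nat 2%nat * L 1%nat * L 3%nat)^2
        + (D 0%nat 3%nat * L 1%nat * L 2%nat)^2 + (D 1%nat 2%nat * L 0%nat * L 3%nat)^2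
        + (D 1%nat 3%nat * L 0%nat * L 2%nat)^2 + (D 2%nat 3%nat * L 0%nat * L 1%nat)^2)).
  { unfold hessian4, quartic_coef, L, D. ring. }
  rewrite E.
  match goal with |- -3 * (?A ^ 2 + ?B ^ 2 + ?C ^ 2 + ?D ^ 2 + ?E ^ 2 + ?F ^ 2) <= 0 =>
    pose proof (pow2_ge_0 A); pose proof (pow2_ge_0 B); pose proof (pow2_ge_0 C);
    pose proof (pow2_ge_0 D); pose proof (pow2_ge_0 E); pose proof (pow2_ge_0 F) end.
  lra.
Qed.

(* For a product of four linear forms, 2 I is the sum of the squares of the
   products of the determinants over the three pairings of the factors; so I
   is positive as soon as one pairing has nonzero determinants. *)
Lemma quartic_invariant_pos (a b : nat -> R) :
  a 0%nat * b 1%nat - a 1%nat * b 0%nat <> 0 ->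
  a 2%nat * b 3%nat - a 3%nat * b 2%nat <> 0 ->
  0 < invariant_I (quartic_coef a b).
Proof.
  intros H01 H23.
  set (D := fun i j => a i * b j - a j * b i).
  assert (E : 2 * invariant_I (quartic_coef a b) =
    (D 0%nat 1%nat * D 2%nat 3%nat)^2 + (D 0%nat 2%nat * D 1%nat 3%nat)^2
    + (D 0%nat 3%nat * D 1%nat 2%nat)^2).
  { unfold invariant_I, quartic_coef, D. ring. }
  assert (P : 0 < (D 0%nat 1%nat * D 2%nat 3%nat)^2).
  { rewrite <- Rsqr_pow2. apply Rsqr_pos_lt.
    apply Rmult_integral_contrapositive_currified; assumption. }
  pose proof (pow2_ge_0 (D 0%nat 2%nat * D 1%nat 3%nat)).
  pose proof (pow2_ge_0 (D 0%nat 3%nat * D 1%nat 2%nat)).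
  lra.
Qed.

(* The quartics apolar to q form a pencil, parametrized by h_0 and h_1; on it
   an explicit combination of I and of the Hessian at (1,-4) and (3,1) is a
   positive definite quadratic form in (h_0, h_1). *)
Lemma q_no_hyperbolic_apolar_quartic (h : nat -> R) :
  apolar_to_q 4 h -> hessian4 h 1 (-4) <= 0 -> hessian4 h 3 1 <= 0 ->
  0 < invariant_I h -> False.
Proof.
  intros Hap P1 P2 I.
  pose proof (Hap 0%nat ltac:(lia)) as A0; pose proof (Hap 1%nat ltac:(lia)) as A1;
  pose proof (Hap 2%nat ltac:(lia)) as A2.
  simpl in A0, A1, A2.
  assert (E2 : h 2%nat = (-128074800067361/23845043392400) * h 0%nat
                         + (4543018810767/1192252169620) * h 1%nat) by lra.
  assert (E3 : h 3%nat = (-63805949175597/23845043392400) * h 0%nat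
                         + (2095726056839/1192252169620) * h 1%nat) by lra.
  assert (E4 : h 4%nat = (-4691395663353/2384504339240) * h 0%nat
                         + (131468993763/119225216962) * h 1%nat) by lra.
  set (u := (397257121766743908999544236511/284293047192719450188880000) * h 0%nat
            + (-11643367523805836069721841377/14214652359635972509444000) * h 1%nat).
  assert (Cert : (397257121766743908999544236511/284293047192719450188880000)
                 * (-1024 * invariant_I h + hessian4 h 1 (-4) + 2 * hessian4 h 3 1)
               = u ^ 2 + (139033063176007731881470273585833/284293047192719450188880000)
                         * h 1%nat ^ 2).
  { unfold u, invariant_I, hessian4. rewrite E2, E3, E4. field. }
  pose proof (pow2_ge_0 u). pose proof (pow2_ge_0 (h 1%nat)).
  lra.
Qed.

Lemma honest_no_zero_form (p : R -> R -> R) (r : nat) (lam al be : nat -> R) (i : nat) :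
  is_representation p r lam al be -> honest r al be -> p 1 0 <> 0 ->
  (i < r)%nat -> al i = 0 -> be i = 0 -> False.
Proof.
  intros [_ Hrep] Hh Hp Hi Ha Hb.
  destruct r as [|[|r]]; [lia| |].
  - assert (i = 0%nat) by lia. subst i.
    apply Hp. rewrite Hrep. simpl. rewrite Ha, Hb. ring.
  - set (j := if Nat.eqb i 0 then 1%nat else 0%nat).
    assert (Hj : (j < S (S r))%nat /\ i <> j)
      by (unfold j; destruct (Nat.eqb_spec i 0); lia).
    apply (Hh i j Hi (proj1 Hj) (proj2 Hj)). rewrite Ha, Hb. ring.
Qed.

Definition pad (r : nat) (f : nat -> R) (dflt : R) (i : nat) : R :=
  if (i <? r)%nat then f i else dflt.

Lemma pad_lt (r : nat) (f : nat -> R) (dflt : R) (i : nat) :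
  (i < r)%nat -> pad r f dflt i = f i.
Proof. intros Hi. unfold pad. rewrite (proj2 (Nat.ltb_lt i r) Hi). reflexivity. Qed.

(* Three terms do not suffice: completing the forms by copies of X to three
   factors gives an apolar cubic, which must be zero, so some factor is zero. *)
Lemma q_rank_gt3 (r : nat) (lam al be : nat -> R) :
  is_representation q r lam al be -> honest r al be -> (r <= 3)%nat -> False.
Proof.
  intros Hrep Hh Hr.
  set (a := pad r al 0). set (b := pad r be 1).
  assert (Hap : apolar_to_q 3 (cubic_coef a b)).
  { apply (rep_apolar r lam al be 3 _ Hrep). intros i Hi.
    rewrite <- (pad_lt r al 0 i Hi), <- (pad_lt r be 1 i Hi).
    apply cubic_vanishes. lia. }
  destruct (cubic_zero_factor a b (cubic_apolar_trivial _ Hap)) as (i & _ & Ha & Hb).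
  unfold a, b, pad in Ha, Hb.
  destruct (Nat.ltb_spec i r) as [Hir|Hir].
  - exact (honest_no_zero_form q r lam al be i Hrep Hh q_nonzero Hir Ha Hb).
  - lra.
Qed.

(* Four terms do not suffice: the product of the four forms is an apolar
   quartic with nonpositive Hessian and, by honesty, positive invariant I. *)
Lemma q_rank_ne4 (lam al be : nat -> R) :
  is_representation q 4 lam al be -> honest 4 al be -> False.
Proof.
  intros Hrep Hh.
  apply (q_no_hyperbolic_apolar_quartic (quartic_coef al be)).
  - apply (rep_apolar 4 lam al be 4 _ Hrep). intros i Hi. apply quartic_vanishes, Hi.
  - apply quartic_hessian_nonpos.
  - apply quartic_hessian_nonpos.
  - apply quartic_invariant_pos; apply Hh; lia.
Qed.

Lemma q_rank_ge5 (r : nat) (lam al be : nat -> R) :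
  is_representation q r lam al be -> honest r al be -> (5 <= r)%nat.
Proof.
  intros Hrep Hh.
  destruct (Nat.le_gt_cases r 3) as [Hr|Hr].
  - exfalso. exact (q_rank_gt3 r lam al be Hrep Hh Hr).
  - destruct (Nat.eq_dec r 4) as [->|Hr4]; [|lia].
    exfalso. exact (q_rank_ne4 lam al be Hrep Hh).
Qed.

Lemma count_sum (r : nat) (lam : nat -> R) :
  (forall i, (i < r)%nat -> lam i <> 0) -> (count_pos r lam + count_neg r lam)%nat = r.
Proof.
  induction r as [|r IH]; intros H; simpl; [reflexivity|].
  assert (IH' : (count_pos r lam + count_neg r lam)%nat = r)
    by (apply IH; intros i Hi; apply H; lia).
  assert (Hr : lam r <> 0) by (apply H; lia).
  destruct (Rlt_dec 0 (lam r)), (Rlt_dec (lam r) 0); [exfalso; lra|lia|lia|].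
  exfalso. apply Hr. lra.
Qed.

Lemma min_size_badge_is_signature (p : R -> R -> R) (n : nat) (ab : nat * nat) :
  (forall r lam al be, is_representation p r lam al be -> honest r al be -> (n <= r)%nat) ->
  badge_of p ab -> (fst ab + snd ab = n)%nat -> signature p ab.
Proof.
  intros Hmin Hab Hsize. split; [exact Hab|].
  intros cd (r & lam & al & be & Hrep & Hh & ->) [Hc Hd].
  pose proof (count_sum r lam (proj1 Hrep)).
  pose proof (Hmin r lam al be Hrep Hh).
  destruct ab as [a b]. simpl in *. f_equal; lia.
Qed.

Definition lamA (i : nat) : R :=
  match i with 0%nat => 1626502592 | 1%nat => 46775365650 | 2%nat => -4555462800
  | 3%nat => -821788645392 | _ => 1780723035 end.
Definition alA (i : nat) : R :=
  match i with 0%nat => 3 | 1%nat => 2 | 2%nat => 3 | 3%nat => 1 | _ => 2 end.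
Definition beA (i : nat) : R :=
  match i with 0%nat => 5 | 1%nat => 1 | 2%nat => 2 | 3%nat => 2 | _ => 5 end.

Definition lamB (i : nat) : R :=
  match i with 0%nat => 6922489184 | 1%nat => -128609457075 | 2%nat => 4859300160
  | 3%nat => -647906688 | _ => -2591626752 end.
Definition alB (i : nat) : R :=
  match i with 0%nat => 3 | 1%nat => 2 | 2%nat => 3 | 3%nat => 2 | _ => 2 end.
Definition beB (i : nat) : R :=
  match i with 0%nat => -4 | 1%nat => -3 | 2%nat => -5 | 3%nat => -5 | _ => -1 end.

Lemma badge_q_3_2 : badge_of q (3%nat, 2%nat).
Proof.
  exists 5%nat, lamA, alA, beA. repeat split.
  - intros i Hi. destruct i as [|[|[|[|[|i]]]]]; unfold lamA; [intro; lra..|lia].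
  - intros x y. unfold q, rsum, mq, binom6, lamA, alA, beA. simpl. ring.
  - intros i j Hi Hj Hij. unfold alA, beA.
    destruct i as [|[|[|[|[|i]]]]]; destruct j as [|[|[|[|[|j]]]]];
      first [exfalso; lia | intro; lra].
  - unfold lamA. simpl.
    repeat match goal with |- context [Rlt_dec ?u ?v] => destruct (Rlt_dec u v) end;
      first [reflexivity | exfalso; lra].
Qed.

Lemma badge_q_2_3 : badge_of q (2%nat, 3%nat).
Proof.
  exists 5%nat, lamB, alB, beB. repeat split.
  - intros i Hi. destruct i as [|[|[|[|[|i]]]]]; unfold lamB; [intro; lra..|lia].
  - intros x y. unfold q, rsum, mq, binom6, lamB, alB, beB. simpl. ring.
  - intros i j Hi Hj Hij. unfold alB, beB.
    destruct i as [|[|[|[|[|i]]]]]; destruct j as [|[|[|[|[|j]]]]];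
      first [exfalso; lia | intro; lra].
  - unfold lamB. simpl.
    repeat match goal with |- context [Rlt_dec ?u ?v] => destruct (Rlt_dec u v) end;
      first [reflexivity | exfalso; lra].
Qed.

Theorem corollary4p5 :
  exists q : R -> R -> R, sextic_form q /\
    exists s1 s2 : nat * nat, signature q s1 /\ signature q s2 /\ s1 <> s2.
Proof.
  exists q. split; [exact q_is_sextic|].
  exists (3%nat, 2%nat), (2%nat, 3%nat). split; [|split].
  - apply (min_size_badge_is_signature q 5); [exact q_rank_ge5 | exact badge_q_3_2 | reflexivity].
  - apply (min_size_badge_is_signature q 5); [exact q_rank_ge5 | exact badge_q_2_3 | reflexivity].
  - intros E. inversion E.
Qed.
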